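(* Let $E$ be a $k$-dimensional subspace of $\mathbb{C}^n$ with $k>1$, and let $W$ be a nonzero subspace of $E$. Then $W$ is special in $E$ if and only if $W = E\cap P(W)$.
   Context: A polydiagonal is a subspace of $\mathbb{C}^n$ of the form $\{x\in\mathbb{C}^n : x_i=x_j \text{ for all } (i,j)\in R\}$ for some (possibly empty) set $R$ of pairs of indices in $\{1,\dots,n\}$; i.e. a subspace defined by equalities of coordinates. The fully synchrony subspace is $F=\{x_1=x_2=\cdots=x_n\}$ (contained in every polydiagonal). For a subspace $W\subseteq\mathbb{C}^n$, $P(W)$ denotes the smallest polydiagonal containing $W$ (the intersection of all polydiagonals containing $W$). Given a subspace $E$ of $\mathbb{C}^n$, a subspace $W$ of $E$ is called special in $E$ if for every subspace $U$ of $E$ with $\dim U=\dim W$ and $P(U)\subseteq P(W)$ one has $P(U)=P(W)$. *)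

(* C^n is modelled as row vectors 'rV[R]_n over an arbitrary
   numClosedFieldType R (algebraically closed field of char 0, e.g. algC). *)
From HB Require Import structures.
From mathcomp Require Import all_boot all_order all_algebra all_field.
Set Implicit Arguments. Unset Strict Implicit. Unset Printing Implicit Defensive.
Import GRing.Theory Num.Theory.
Local Open Scope ring_scope.

Definition polydiagonal (R : fieldType) (n : nat) (D : {vspace 'rV[R]_n}) : Prop :=
  exists r : rel 'I_n, forall x : 'rV[R]_n,
    x \in D <-> (forall i j, r i j -> x 0 i = x 0 j).

Definition inP (R : fieldType) (n : nat) (W : {vspace 'rV[R]_n}) (x : 'rV[R]_n) : Prop :=
  forall D : {vspace 'rV[R]_n}, polydiagonal D -> (W <= D)%VS -> x \in D.

Definition special (R : fieldType) (n : nat) (E W : {vspace 'rV[R]_n}) : Prop :=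
  (W <= E)%VS /\
  forall U : {vspace 'rV[R]_n}, (U <= E)%VS -> \dim U = \dim W ->
    (forall x, inP U x -> inP W x) -> (forall x, inP U x <-> inP W x).


From HB Require Import structures.
From mathcomp Require Import all_boot all_order all_algebra all_field.
From Stdlib Require Import Classical ClassicalEpsilon.
Import GRing.Theory.
Local Open Scope ring_scope.

Set Implicit Arguments. Unset Strict Implicit. Unset Printing Implicit Defensive.

(* Characterisation of special subspaces: a nonzero W <= E is special in E iff
   W = E :&: P(W).

   1. Every relation r on coordinates gives a polydiagonal polydiag r, the kernel
      of the linear map x |-> (x_i - x_j)_{r i j}.  Taking for r the relation
      sync W "coordinates i and j agree on all of W" yields P(W) = polydiag
      (sync W), i.e. inP W x means x_i = x_j whenever all w in W have w_i = w_j.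
   2. (<=) If W = E :&: P(W) and U <= E has the dimension of W and P(U) <= P(W),
      then U <= E :&: P(W) = W, hence U = W by dimension.
   3. (=>) Let W be special and x in E :&: P(W) outside W.  If every vector of W
      has constant coordinates, so does x, and x lies on the line W.  Otherwise
      some w in W has w_a <> w_b; cutting V = W + <[x]> by the hyperplane
      {y_a = y_b} gives U with dim U = dim W, U <= E and P(U) <= P(W).
      Speciality forces P(U) = P(W), but P(U) lies in {y_a = y_b} and w does
      not: contradiction. *)

Lemma dim_add_line (K : fieldType) (vT : vectType K) (W : {vspace vT}) (x : vT) :
  x \notin W -> \dim (W + <[x]>) = (\dim W).+1.
Proof.
move=> xNW; have x_neq0 : x != 0 by apply: contraNneq xNW => ->; apply: mem0v.
rewrite dimv_disjoint_sum ?dim_vline ?x_neq0 ?addn1 //.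
apply/eqP; rewrite -subv0; apply/subvP => y /memv_capP[yW /vlineP[c def_y]].
rewrite memv0 def_y; apply: contraNT xNW => cx_neq0.
have c_neq0 : c != 0 by apply: contraNneq cx_neq0 => ->; rewrite scale0r.
by rewrite -(scalerK c_neq0 x) memvZ // -def_y.
Qed.

Lemma dim_cap_kernel_form (K : fieldType) (vT : vectType K)
    (f : 'Hom(vT, K^o)) (V : {vspace vT}) (v : vT) :
  v \in V -> f v != 0 -> (\dim (V :&: lker f)).+1 = \dim V.
Proof.
move=> vV fv_neq0; rewrite -(limg_ker_dim f V) -addn1; congr (_ + _)%N.
apply/eqP; rewrite eqn_leq; apply/andP; split; last first.
  by have := dimvS (subvf (f @: V)); rewrite dimvf.
rewrite lt0n dimv_eq0; apply: contra fv_neq0 => /eqP imgV0.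
by have := memv_img f vV; rewrite imgV0 memv0.
Qed.

Section Polydiagonals.
Variables (R : fieldType) (n : nat).
Implicit Types (W U : {vspace 'rV[R]_n}) (x : 'rV[R]_n) (r : rel 'I_n).

Definition sync_defect r x : 'M[R]_n :=
  \matrix_(i, j) (if r i j then x 0 i - x 0 j else 0).

Fact sync_defect_linear r : linear (sync_defect r).
Proof.
move=> c x y; apply/matrixP => i j; rewrite !mxE.
by case: (r i j); rewrite ?mulr0 ?addr0 // mulrBr opprD addrACA.
Qed.

HB.instance Definition _ r :=
  GRing.isLinear.Build R 'rV[R]_n 'M[R]_n _ (sync_defect r) (sync_defect_linear r).

Definition polydiag r : {vspace 'rV[R]_n} := lker (linfun (sync_defect r)).

Lemma mem_polydiag r x : x \in polydiag r <-> (forall i j, r i j -> x 0 i = x 0 j).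
Proof.
rewrite memv_ker lfunE /=; split => [/eqP defect0 i j rij | sync_x].
  have /eqP := congr1 (fun M : 'M[R]_n => M i j) defect0.
  by rewrite !mxE rij subr_eq0 => /eqP.
apply/eqP/matrixP => i j; rewrite !mxE.
by case rij: (r i j); rewrite // (sync_x i j rij) subrr.
Qed.

Lemma polydiag_polydiagonal r : polydiagonal (polydiag r).
Proof. by exists r => x; apply: mem_polydiag. Qed.

Definition coord_diff (a b : 'I_n) (x : 'rV[R]_n) : R^o := x 0 a - x 0 b.

Fact coord_diff_linear a b : linear (coord_diff a b).
Proof.
by move=> c x y; rewrite /coord_diff !mxE -[c *: _]/(c * _) mulrBr opprD addrACA.
Qed.

HB.instance Definition _ a b :=
  GRing.isLinear.Build R 'rV[R]_n R^o _ (coord_diff a b) (coord_diff_linear a b).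

Lemma mem_ker_coord_diff a b x :
  x \in lker (linfun (coord_diff a b)) <-> x 0 a = x 0 b.
Proof. by rewrite memv_ker lfunE /= /coord_diff subr_eq0; split => /eqP. Qed.

Definition sync W : rel 'I_n :=
  fun i j => if excluded_middle_informative (forall w, w \in W -> w 0 i = w 0 j)
             then true else false.

Lemma syncP W i j : sync W i j <-> (forall w, w \in W -> w 0 i = w 0 j).
Proof. by rewrite /sync; case: excluded_middle_informative. Qed.

Lemma inP_polydiag W x : inP W x <-> x \in polydiag (sync W).
Proof.
split => [PWx | /mem_polydiag sync_x D [r memD] WD].
  apply: PWx; first exact: polydiag_polydiagonal.
  by apply/subvP => w wW; apply/mem_polydiag => i j /syncP; apply.
apply/memD => i j rij; apply: sync_x; apply/syncP => w wW.
by have /memD := subvP WD w wW; apply.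
Qed.

Lemma inP_mem W x : x \in W -> inP W x.
Proof. by move=> xW D _ WD; apply: (subvP WD). Qed.

Lemma inP_coord_eq W x a b :
  inP W x -> (forall w, w \in W -> w 0 a = w 0 b) -> x 0 a = x 0 b.
Proof. by move=> /inP_polydiag/mem_polydiag sync_x /syncP; apply: sync_x. Qed.

Lemma inP_trans W U : (forall u, u \in U -> inP W u) -> forall y, inP U y -> inP W y.
Proof.
move=> UPW y PUy; apply/inP_polydiag; apply: PUy; first exact: polydiag_polydiagonal.
by apply/subvP => u /UPW/inP_polydiag.
Qed.

Lemma constant_mem W x :
  W != 0%VS -> (forall w i j, w \in W -> w 0 i = w 0 j) ->
  (forall i j, x 0 i = x 0 j) -> x \in W.
Proof.
move=> W_neq0 constW constx; set w := vpick W.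
have wW : w \in W by apply: memv_pick.
have [i0 wi0_neq0 | w_eq0] := pickP (fun i => w 0 i != 0); last first.
  have /negP[] : w != 0 by rewrite vpick0.
  by apply/eqP/rowP => i; rewrite mxE; apply/eqP/negbFE/w_eq0.
suff -> : x = (x 0 i0 / w 0 i0) *: w by apply: memvZ.
apply/rowP => i; rewrite mxE (constW w i i0 wW) (constx i i0).
by rewrite mulfVK.
Qed.

Lemma special_of_cap E W :
  (W <= E)%VS -> (forall x, x \in W <-> (x \in E /\ inP W x)) -> special E W.
Proof.
move=> WE capW; split => // U UE dimU PU_PW.
suff /eqP -> : U == W by [].
rewrite eqEdim dimU leqnn andbT; apply/subvP => u uU.
by apply/capW; split; [apply: (subvP UE) | apply/PU_PW/inP_mem].
Qed.

Lemma mem_of_special E W x :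
  W != 0%VS -> special E W -> x \in E -> inP W x -> x \in W.
Proof.
move=> W_neq0 [WE specW] xE PWx; apply: NNPP => xNW.
have [[a [b [w [wW wab]]]] | no_gap] :=
  classic (exists a b w, w \in W /\ w 0 a <> w 0 b); last first.
  have constW w i j : w \in W -> w 0 i = w 0 j.
    by move=> wW; apply: NNPP => wij; apply: no_gap; exists i, j, w.
  apply: xNW; apply: constant_mem => // i j.
  by apply: inP_coord_eq PWx _ => w wW; apply: constW.
pose f := linfun (coord_diff a b).
pose U := ((W + <[x]>) :&: lker f)%VS.
have wV : w \in (W + <[x]>)%VS by apply: subvP (addvSl _ _) _ wW.
have fw_neq0 : f w != 0.
  by rewrite -memv_ker; apply/negP => /mem_ker_coord_diff.
have dimU : \dim U = \dim W.
  have := dim_cap_kernel_form wV fw_neq0.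
  by rewrite dim_add_line => [[] | ]; last apply/negP.
have UE : (U <= E)%VS.
  by apply: subv_trans (capvSl _ _) _; rewrite subv_add WE -memvE.
have UPW u : u \in U -> inP W u.
  move=> /memv_capP[/memv_addP[y yW [z /vlineP[c ->] ->]] _].
  apply/inP_polydiag; rewrite memvD ?memvZ //; apply/inP_polydiag => //.
  exact: inP_mem.
have PUw : inP U w by apply/(specW U UE dimU (inP_trans UPW) w); apply: inP_mem.
by apply: wab; apply: inP_coord_eq PUw _ => u /memv_capP[_ /mem_ker_coord_diff].
Qed.

End Polydiagonals.

Theorem mainTheorem1 (R : numClosedFieldType) (n k : nat)
    (E W : {vspace 'rV[R]_n}) :
  \dim E = k -> (1 < k)%N -> (W <= E)%VS -> W != 0%VS ->
  special E W <-> (forall x : 'rV[R]_n, x \in W <-> (x \in E /\ inP W x)).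
Proof.
move=> _ _ WE W_neq0; split; last exact: special_of_cap.
move=> specW x; split => [xW | [xE PWx]].
  by split; [apply: (subvP WE) | apply: inP_mem].
exact: mem_of_special W_neq0 specW xE PWx.
Qed.
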